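(* Let $(W,S)$ be a Coxeter system with $S$ finite, let $Q_W$ be its Coxeter quandle, let $\phi:\operatorname{Ad}(Q_W)\to W$ be the homomorphism $e_x\mapsto x$, and let $C_W=\ker\phi$. Let $\mathcal{R}_W\subseteq S$ be a complete set of representatives of the $W$-conjugacy classes of elements of $Q_W$, and let $c(W)$ be the number of such conjugacy classes. Then $C_W$ is the free abelian group with basis $\{e_s^2\mid s\in\mathcal{R}_W\}$. In particular $C_W\cong\mathbb{Z}^{c(W)}$.
   Context: A Coxeter system $(W,S)$: $S$ is a finite set, $m:S\times S\to\mathbb{N}\cup\{\infty\}$ satisfies $m(s,s)=1$ and $2\le m(s,t)=m(t,s)\le\infty$ for $s\neq t$, and $W=\langle s\in S\mid (st)^{m(s,t)}=1\ (m(s,t)<\infty)\rangle$. The Coxeter quandle is $Q_W=\bigcup_{w\in W}w^{-1}Sw$ (the set of reflections) with operation $x\ast y=y^{-1}xy=yxy$. The adjoint group of $Q_W$ is $\operatorname{Ad}(Q_W)=\langle e_x\ (x\in Q_W)\mid e_y^{-1}e_xe_y=e_{x\ast y}\ (x,y\in Q_W)\rangle$. The map $\phi:\operatorname{Ad}(Q_W)\to W$, $e_x\mapsto x$, is a well-defined surjective homomorphism. Every $W$-conjugacy class of $Q_W$ meets $S$, so $\mathcal{R}_W\subseteq S$ can be chosen. *)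

(* Groups given by presentations, modelled as setoids of
   words in the free monoid on generators and their formal inverses. *)
From mathcomp Require Import all_boot all_order all_algebra.
Set Implicit Arguments. Unset Strict Implicit. Unset Printing Implicit Defensive.

(* Words in the generators X: (x, false) = x, (x, true) = x^-1. *)
Definition word (X : Type) := seq (X * bool).

Definition winv (X : Type) (w : word X) : word X :=
  rev (map (fun p => (p.1, ~~ p.2)) w).

Inductive pres_eq (X : Type) (R : word X -> Prop) : word X -> word X -> Prop :=
| pe_refl w : pres_eq R w w
| pe_sym u v : pres_eq R u v -> pres_eq R v u
| pe_trans u v w : pres_eq R u v -> pres_eq R v w -> pres_eq R u w
| pe_cancel u v x b : pres_eq R (u ++ (x, b) :: (x, ~~ b) :: v) (u ++ v)
| pe_rel u v r : R r -> pres_eq R (u ++ r ++ v) (u ++ v).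

Definition wpow (X : Type) (w : word X) (n : int) : word X :=
  match n with
  | Posz k => flatten (nseq k w)
  | Negz k => flatten (nseq k.+1 (winv w))
  end.

Unset Implicit Arguments.
Section Coxeter.
Variables (S : finType) (m : S -> S -> nat).
(* Convention: m s t = 0 encodes m(s,t) = infinity. *)

Definition cox_rel (r : word S) : Prop :=
  exists s t, m s t != 0%N /\
    r = flatten (nseq (m s t) [:: (s, false); (t, false)]).

Definition W_eq : word S -> word S -> Prop := pres_eq cox_rel.

Definition is_refl (x : word S) : Prop :=
  exists (s : S) (u : word S), W_eq x (winv u ++ [:: (s, false)] ++ u).

Definition QW : Type := {x : word S | is_refl x}.

Definition W_conj (x y : word S) : Prop :=
  exists u : word S, W_eq x (winv u ++ y ++ u).

(* Relators of Ad(Q_W): e_y^-1 e_x e_y = e_{x*y}, x*y = yxy. Since the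
   generator index z ranges over all words W-equal to yxy, generators
   e_z, e_z' with z =_W z' are identified (take x = y = z). *)
Definition ad_rel (r : word QW) : Prop :=
  exists x y z : QW, W_eq (sval z) (sval y ++ sval x ++ sval y) /\
    r = [:: (y, true); (x, false); (y, false); (z, true)].

Definition Ad_eq : word QW -> word QW -> Prop := pres_eq ad_rel.

Definition phi (w : word QW) : word S :=
  flatten (map (fun p => if p.2 then winv (sval p.1) else sval p.1) w).

Definition in_CW (w : word QW) : Prop := W_eq (phi w) [::].

Lemma gen_is_refl (s : S) : is_refl [:: (s, false)].
Proof. by exists s, [::]; apply: pe_refl. Qed.

Definition e_gen (s : S) : QW := exist _ [:: (s, false)] (gen_is_refl s).

Definition esq (s : S) : word QW := [:: (e_gen s, false); (e_gen s, false)].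

Definition esq_prod (R : {set S}) (n : S -> int) : word QW :=
  flatten [seq wpow (esq r) (n r) | r <- enum R].

End Coxeter.

From mathcomp Require Import all_boot all_order all_algebra.
From mathcomp Require Import zify.
From Stdlib Require Import Setoid Morphisms ClassicalEpsilon.
Set Implicit Arguments. Unset Strict Implicit. Unset Printing Implicit Defensive.
Import GRing.Theory.

(* Conjugation in Ad(Q_W) acts on the generators through phi:
   g^-1 e_x g = e_(phi(g)^-1 x phi(g)). Hence every element of C_W = ker phi
   commutes with all generators, and C_W is central.
   Adding the relators e_x^2 = 1 to Ad(Q_W) gives back W: s |-> e_s inverts
   phi, because modulo squares an alternating word e_s e_t e_s ... of odd
   length equals the generator e_x of the reflection x = sts... it represents,
   which turns (st)^m = 1 into e_t^2 = 1. So every element of C_W is a product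
   of squares e_x^(+-2); these are central and e_x^2 is conjugate to e_r^2
   for the representative r of the class of x, so e_x^2 = e_r^2.
   For independence, the signed number of letters e_x of a word with x
   conjugate to r is invariant under the quandle relations, and it takes the
   value 2 on e_r^2 and 0 on e_r'^2 for r' <> r. *)

Local Hint Resolve pe_refl : core.

Lemma winv_cat (X : Type) (a b : word X) : winv (a ++ b) = winv b ++ winv a.
Proof. by rewrite /winv map_cat rev_cat. Qed.

Lemma winvK (X : Type) : involutive (@winv X).
Proof.
move=> w; rewrite /winv map_rev revK -map_comp.
by rewrite (eq_map (g := id)) ?map_id // => -[x b] /=; rewrite negbK.
Qed.

Lemma winv1 (X : Type) (x : X) b : winv [:: (x, b)] = [:: (x, ~~ b)].
Proof. by []. Qed.

Definition relabel (X Y : Type) (f : X -> Y) (w : word X) : word Y :=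
  map (fun p => (f p.1, p.2)) w.

Lemma relabel_cat (X Y : Type) (f : X -> Y) (a b : word X) :
  relabel f (a ++ b) = relabel f a ++ relabel f b.
Proof. exact: map_cat. Qed.

Lemma relabel_winv (X Y : Type) (f : X -> Y) (w : word X) :
  relabel f (winv w) = winv (relabel f w).
Proof. by rewrite /relabel /winv map_rev -!map_comp. Qed.

Section Presentation.
Variables (X : Type) (R : word X -> Prop).
Local Notation pe := (pres_eq R).

Lemma pres_eq_equiv : Equivalence pe.
Proof. split; [exact: pe_refl | exact: pe_sym | exact: pe_trans]. Qed.
#[local] Existing Instance pres_eq_equiv.

Lemma pres_eq_catl u a b : pe a b -> pe (u ++ a) (u ++ b).
Proof.
elim=> {a b} [w|a b _ IH|a b c _ IH1 _ IH2|a v x bb|a v r Hr].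
- exact: pe_refl.
- exact: pe_sym.
- exact: pe_trans IH2.
- by rewrite !catA; apply: pe_cancel.
- by rewrite !catA -(catA _ r); apply: pe_rel.
Qed.

Lemma pres_eq_catr v a b : pe a b -> pe (a ++ v) (b ++ v).
Proof.
elim=> {a b} [w|a b _ IH|a b c _ IH1 _ IH2|a u x bb|a u r Hr].
- exact: pe_refl.
- exact: pe_sym.
- exact: pe_trans IH2.
- by rewrite -!catA /=; apply: pe_cancel.
- by rewrite -!catA; apply: pe_rel.
Qed.

#[local] Instance cat_pres_eq : Proper (pe ==> pe ==> pe) (@cat (X * bool)).
Proof.
by move=> a b Hab c d Hcd; apply: pe_trans (pres_eq_catr _ Hab) (pres_eq_catl _ Hcd).
Qed.

#[local] Instance cons_pres_eq : Proper (eq ==> pe ==> pe) (@cons (X * bool)).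
Proof. by move=> x _ <- a b Hab; apply: (pres_eq_catl [:: x] Hab). Qed.

Lemma pres_eq_relator r : R r -> pe r [::].
Proof. by move=> Hr; have := pe_rel [::] [::] Hr; rewrite cats0. Qed.

Lemma pres_eq_catV w : pe (w ++ winv w) [::].
Proof.
elim: w => [|[x b] w IH]; first reflexivity.
rewrite -cat1s winv_cat winv1 -catA (catA w) IH.
exact: (pe_cancel R [::] [::]).
Qed.

Lemma pres_eq_Vcat w : pe (winv w ++ w) [::].
Proof. by have := pres_eq_catV (winv w); rewrite winvK. Qed.

Lemma pres_eq_winv a b : pe a b -> pe (winv a) (winv b).
Proof.
elim=> {a b} [w|a b _ IH|a b c _ IH1 _ IH2|u v x bb|u v r Hr].
- reflexivity.
- by symmetry.
- by rewrite IH1.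
- rewrite !winv_cat -cat1s -(cat1s (x, ~~ bb)) !winv_cat !winv1 negbK -!catA.
  exact: pe_cancel.
- have winv_r : pe (winv r) [::].
    rewrite -(pres_eq_Vcat r) -{1}[winv r]cats0.
    by apply: pres_eq_catl; symmetry; apply: pres_eq_relator.
  by rewrite !winv_cat winv_r cats0.
Qed.

#[local] Instance winv_pres_eq : Proper (pe ==> pe) (@winv X).
Proof. by move=> a b; apply: pres_eq_winv. Qed.

Lemma pres_eq_moveR a b c : pe (a ++ b) c -> pe a (c ++ winv b).
Proof. by move=> H; rewrite -H -catA pres_eq_catV cats0. Qed.

Lemma pres_eq_moveL a b c : pe (a ++ b) c -> pe b (winv a ++ c).
Proof. by move=> H; rewrite -H catA pres_eq_Vcat. Qed.

Lemma pres_eq_gen_inv x : pe [:: (x, false); (x, false)] [::] ->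
  pe [:: (x, true)] [:: (x, false)].
Proof.
move=> /(pres_eq_moveL (a := [:: (x, false)]) (b := [:: (x, false)])).
by rewrite winv1 cats0 => ->.
Qed.

Lemma flatten_nseqD (v : word X) a b :
  flatten (nseq (a + b) v) = flatten (nseq a v) ++ flatten (nseq b v).
Proof. by rewrite nseqD flatten_cat. Qed.

Section Powers.
Variable w : word X.
Local Notation P k := (flatten (nseq k w)).
Local Notation N k := (flatten (nseq k (winv w))).

Lemma winv_flatten_nseq k : winv (P k) = N k.
Proof.
by elim: k => [|k IH] //; rewrite -[in LHS]addn1 flatten_nseqD winv_cat IH /= cats0.
Qed.

Lemma wpow_subz (a b : nat) :
  pe (P a ++ N b) (wpow w (a%:Z - b%:Z)%R) /\ pe (N b ++ P a) (wpow w (a%:Z - b%:Z)%R).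
Proof.
have [Hba|Hab] := leqP b a.
- have [c ->] : exists c, a = (b + c)%N by exists (a - b)%N; lia.
  have -> : ((b + c)%N%:Z - b%:Z = c%:Z)%R by lia.
  rewrite flatten_nseqD -winv_flatten_nseq /=; split.
    by rewrite -flatten_nseqD addnC flatten_nseqD -catA pres_eq_catV cats0.
  by rewrite catA pres_eq_Vcat.
- have [c ->] : exists c, b = (a + c.+1)%N by exists (b - a.+1)%N; lia.
  have -> : (a%:Z - (a + c.+1)%N%:Z = Negz c)%R by rewrite NegzE; lia.
  split.
    by rewrite flatten_nseqD -winv_flatten_nseq catA pres_eq_catV.
  by rewrite addnC flatten_nseqD -catA -[N a]winv_flatten_nseq pres_eq_Vcat cats0.
Qed.

Lemma wpowD (a b : int) : pe (wpow w a ++ wpow w b) (wpow w (a + b)%R).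
Proof.
case: a => a; case: b => b /=.
- by rewrite -flatten_nseqD.
- have -> : (a%:Z + Negz b)%R = (a%:Z - b.+1%:Z)%R by rewrite NegzE.
  exact: (wpow_subz a b.+1).1.
- have -> : (Negz a + b%:Z)%R = (b%:Z - a.+1%:Z)%R by rewrite NegzE; lia.
  exact: (wpow_subz b a.+1).2.
- rewrite -[winv w ++ N a]/(N a.+1) -[winv w ++ N b]/(N b.+1).
  by rewrite -flatten_nseqD addSn addnS.
Qed.

End Powers.
End Presentation.

#[global] Existing Instance pres_eq_equiv.
#[global] Existing Instance cat_pres_eq.
#[global] Existing Instance cons_pres_eq.
#[global] Existing Instance winv_pres_eq.

Lemma pres_eq_sub (X : Type) (R1 R2 : word X -> Prop) :
  (forall r, R1 r -> R2 r) -> forall a b, pres_eq R1 a b -> pres_eq R2 a b.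
Proof.
move=> sub12 a b; elim=> {a b} [w|a b _ IH|a b c _ IH1 _ IH2|u v x b|u v r Hr].
- reflexivity.
- by symmetry.
- by rewrite IH1.
- exact: pe_cancel.
- by apply: pe_rel; apply: sub12.
Qed.

Lemma pres_eq_relabel (X Y : Type) (R1 : word X -> Prop) (R2 : word Y -> Prop)
    (f : X -> Y) :
  (forall r, R1 r -> pres_eq R2 (relabel f r) [::]) ->
  forall a b, pres_eq R1 a b -> pres_eq R2 (relabel f a) (relabel f b).
Proof.
move=> f_rel a b; elim=> {a b} [w|a b _ IH|a b c _ IH1 _ IH2|u v x b|u v r Hr].
- reflexivity.
- by symmetry.
- by rewrite IH1.
- by rewrite !relabel_cat; apply: pe_cancel.
- by rewrite !relabel_cat (f_rel _ Hr) /=.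
Qed.

Section Degree.
Variables (X : Type) (f : X -> int).
Local Open Scope ring_scope.

Definition wdeg (w : word X) : int :=
  \sum_(p <- w) (if p.2 then - f p.1 else f p.1).

Lemma wdeg_cat a b : wdeg (a ++ b) = wdeg a + wdeg b.
Proof. by rewrite /wdeg big_cat. Qed.

Lemma wdeg_cons p w : wdeg (p :: w) = (if p.2 then - f p.1 else f p.1) + wdeg w.
Proof. by rewrite /wdeg big_cons. Qed.

Lemma wdeg_nil : wdeg [::] = 0.
Proof. by rewrite /wdeg big_nil. Qed.

Lemma wdeg_winv w : wdeg (winv w) = - wdeg w.
Proof.
elim: w => [|[x b] w IH]; first by rewrite wdeg_nil oppr0.
rewrite -cat1s winv_cat winv1 !wdeg_cat IH !wdeg_cons wdeg_nil /=.
by case: b => /=; lia.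
Qed.

Lemma wdeg_wpow w k : wdeg (wpow w k) = k * wdeg w.
Proof.
have wdeg_nseq n v : wdeg (flatten (nseq n v)) = n%:Z * wdeg v.
  by elim: n => [|n IH] /=; rewrite ?wdeg_nil ?mul0r // wdeg_cat IH; lia.
case: k => k /=; first exact: wdeg_nseq.
by rewrite wdeg_cat wdeg_nseq wdeg_winv NegzE; lia.
Qed.

Lemma pres_eq_wdeg (R : word X -> Prop) :
  (forall r, R r -> wdeg r = 0) -> forall a b, pres_eq R a b -> wdeg a = wdeg b.
Proof.
move=> deg_rel a b; elim=> {a b} [//|a b _ //|a b c _ -> _ -> //|u v x b|u v r Hr].
- by rewrite !wdeg_cat !wdeg_cons; case: b => /=; lia.
- by rewrite !wdeg_cat (deg_rel r Hr) add0r.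
Qed.

End Degree.

Section Coxeter.
Variables (S : finType) (m : S -> S -> nat).
Hypothesis m_diag : forall s, m s s = 1%N.
Local Notation Weq := (pres_eq (cox_rel S m)).
Local Notation Ad := (pres_eq (ad_rel S m)).
Local Notation QW := (QW S m).
Local Notation phi := (phi S m).
Local Notation CW := (in_CW S m).

Lemma W_gen_sq s : Weq [:: (s, false); (s, false)] [::].
Proof. by apply: pres_eq_relator; exists s, s; rewrite m_diag. Qed.

Lemma W_gen_inv s : Weq [:: (s, true)] [:: (s, false)].
Proof. exact/pres_eq_gen_inv/W_gen_sq. Qed.

Lemma refl_winv y : is_refl S m y -> Weq (winv y) y.
Proof. by move=> [s [v ->]]; rewrite !winv_cat winvK winv1 W_gen_inv -catA. Qed.

Lemma refl_sq y : is_refl S m y -> Weq (y ++ y) [::].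
Proof.
move=> [s [v ->]]; rewrite -!catA (catA v) pres_eq_catV /=.
by rewrite -[[:: _, _ & v]]/([:: (s, false); (s, false)] ++ v) W_gen_sq pres_eq_Vcat.
Qed.

Lemma is_refl_conj x u : is_refl S m x -> is_refl S m (winv u ++ x ++ u).
Proof. by move=> [s [v Hv]]; exists s, (v ++ u); rewrite /W_eq Hv winv_cat -!catA. Qed.

Lemma W_conj_refl_conj a b y rho : Weq a (y ++ b ++ y) -> is_refl S m y ->
  W_conj S m b rho -> W_conj S m a rho.
Proof.
move=> Ha Hy [u Hu]; exists (u ++ y).
by rewrite /W_eq Ha Hu winv_cat (refl_winv Hy) -!catA.
Qed.

Definition phi_letter (p : QW * bool) : word S :=
  if p.2 then winv (sval p.1) else sval p.1.

Lemma phi_cons p w : phi (p :: w) = phi_letter p ++ phi w.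
Proof. by []. Qed.

Lemma phi_cat a b : phi (a ++ b) = phi a ++ phi b.
Proof. by rewrite /phi map_cat flatten_cat. Qed.

Lemma phi_winv a : phi (winv a) = winv (phi a).
Proof.
elim: a => [|[x b] a IH] //.
rewrite -cat1s !winv_cat !phi_cat IH winv1 /phi /= !cats0.
by case: b => //=; rewrite winvK.
Qed.

Definition qconj (x : QW) (u : word S) : QW :=
  exist _ (winv u ++ sval x ++ u) (is_refl_conj u (svalP x)).

Lemma Ad_gen_eqW (x y : QW) : Weq (sval x) (sval y) ->
  Ad [:: (x, false)] [:: (y, false)].
Proof.
move=> Hxy.
have rel : ad_rel S m [:: (x, true); (x, false); (x, false); (y, true)].
  by exists x, x, y; split => //; rewrite /W_eq catA (refl_sq (svalP x)) /= Hxy.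
have := pres_eq_relator rel.
rewrite -[[:: (x, true); _; _; _]]/([::] ++ [:: (x, true), (x, false) & [:: _; _]]).
rewrite (pe_cancel _ [::] _ x true) /=.
by move=> /(pres_eq_moveR (a := [:: (x, false)])); rewrite winv1.
Qed.

Lemma Ad_conj_letter (p : QW * bool) (x : QW) :
  Ad (winv [:: p] ++ [:: (x, false)] ++ [:: p]) [:: (qconj x (phi_letter p), false)].
Proof.
case: p => y [] /=; set z := qconj x _.
- have rel : ad_rel S m [:: (y, true); (z, false); (y, false); (x, true)].
    exists z, y, x; split => //=; rewrite /W_eq /phi_letter /= winvK.
    rewrite -catA catA (refl_sq (svalP y)) /= (refl_winv (svalP y)).
    by rewrite -catA (refl_sq (svalP y)) cats0.
  move/pres_eq_relator/(pres_eq_moveL (a := [:: (y, true)])): rel.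
  by move/(pres_eq_moveR (a := [:: (z, false)])) => ->.
- have rel : ad_rel S m [:: (y, true); (x, false); (y, false); (z, true)].
    exists x, y, z; split => //.
    by rewrite /W_eq /= /phi_letter /= (refl_winv (svalP y)).
  by move/pres_eq_relator/(pres_eq_moveR (a := [:: _; _; _])): rel; rewrite winv1.
Qed.

Lemma Ad_conj_gen g (x : QW) :
  Ad (winv g ++ [:: (x, false)] ++ g) [:: (qconj x (phi g), false)].
Proof.
elim: g x => [|p g IH] x.
  by apply: Ad_gen_eqW => /=; rewrite cats0.
rewrite -cat1s winv_cat -!catA (catA (winv [:: p])) (catA _ _ g).
rewrite -(catA (winv [:: p])) Ad_conj_letter IH; apply: Ad_gen_eqW => /=.
by rewrite phi_cons winv_cat -!catA.
Qed.

Lemma CW_cat a b : CW a -> CW b -> CW (a ++ b).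
Proof. by rewrite /in_CW /W_eq phi_cat => -> ->. Qed.

Lemma CW_winv g : CW g -> CW (winv g).
Proof. by rewrite /in_CW /W_eq phi_winv => ->. Qed.

Lemma CW_wpow w k : CW w -> CW (wpow w k).
Proof.
have CW_nseq v n : CW v -> CW (flatten (nseq n v)).
  by move=> Hv; elim: n => [|n IH] //=; apply: CW_cat.
move=> Hw; case: k => k /=; first exact: CW_nseq.
by apply: CW_cat; [exact: CW_winv | exact: CW_nseq (CW_winv Hw)].
Qed.

Lemma CW_esq r : CW (esq S m r).
Proof. exact: W_gen_sq. Qed.

Lemma CW_commute_gen g (x : QW) : CW g ->
  Ad (g ++ [:: (x, false)]) ([:: (x, false)] ++ g).
Proof.
move=> Hg.
have conj_x : Ad (winv g ++ [:: (x, false)] ++ g) [:: (x, false)].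
  by rewrite Ad_conj_gen; apply: Ad_gen_eqW => /=; rewrite Hg cats0.
by rewrite (pres_eq_moveL conj_x) winvK.
Qed.

Lemma CW_central g h : CW g -> Ad (g ++ h) (h ++ g).
Proof.
move=> Hg; elim: h => [|[x b] h IH]; first by rewrite cats0.
rewrite -cat1s catA -(catA [:: (x, b)]) -IH catA.
suff -> : Ad (g ++ [:: (x, b)]) ([:: (x, b)] ++ g) by [].
case: b; last exact: CW_commute_gen.
have := pres_eq_winv (CW_commute_gen x (CW_winv Hg)).
by rewrite !winv_cat winvK winv1 => ->.
Qed.

Lemma Ad_conj_CW g a : CW a -> Ad (winv g ++ a ++ g) a.
Proof. by move=> Ha; rewrite catA -(CW_central (winv g) Ha) -catA pres_eq_Vcat cats0. Qed.

Lemma Ad_conj_cat g a b :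
  Ad ((winv g ++ a ++ g) ++ (winv g ++ b ++ g)) (winv g ++ (a ++ b) ++ g).
Proof. by rewrite -!catA (catA g (winv g)) pres_eq_catV. Qed.

(* Relators of Ad(Q_W) / <<e_x^2 | x in Q_W>>, which is a presentation of W. *)
Definition sq_rel (r : word QW) : Prop :=
  ad_rel S m r \/ exists x : QW, r = [:: (x, false); (x, false)].
Local Notation Qeq := (pres_eq sq_rel).

Lemma Qeq_Ad a b : Ad a b -> Qeq a b.
Proof. by apply: pres_eq_sub => r; left. Qed.

Lemma Qeq_gen_sq (x : QW) : Qeq [:: (x, false); (x, false)] [::].
Proof. by apply: pres_eq_relator; right; exists x. Qed.

Lemma Qeq_gen_inv (x : QW) : Qeq [:: (x, true)] [:: (x, false)].
Proof. exact/pres_eq_gen_inv/Qeq_gen_sq. Qed.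

Local Notation psi := (relabel (e_gen S m)).

Lemma phi_psi a : phi (psi a) = a.
Proof. by elim: a => [|[s [|]] a IH] //=; rewrite phi_cons IH. Qed.

Fixpoint alt (s t : S) (n : nat) : word S :=
  if n is n'.+1 then (s, false) :: alt t s n' else [::].

Lemma alt_rcons n s t :
  alt s t n.+1 = rcons (alt s t n) (if odd n then t else s, false).
Proof.
elim: n s t => [|n IH] s t //.
by rewrite -[alt s t n.+2]/((s, false) :: alt t s n.+1) IH /=; case: (odd n).
Qed.

Lemma flatten_nseq_alt k s t :
  flatten (nseq k [:: (s, false); (t, false)]) = alt s t k.*2.
Proof. by elim: k => [|k IH] //=; rewrite IH. Qed.

Lemma Qeq_alt_odd k s t : exists x : QW,
  Weq (sval x) (alt s t k.*2.+1) /\ Qeq (psi (alt s t k.*2.+1)) [:: (x, false)].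
Proof.
elim: k s t => [|k IH] s t; first by exists (e_gen S m s).
have [y [Wy Qy]] := IH t s.
have -> : alt s t k.+1.*2.+1 = [:: (s, false)] ++ alt t s k.*2.+1 ++ [:: (s, false)].
  by rewrite -[alt s t _]/((s, false) :: alt t s k.*2.+2) alt_rcons /= odd_double cats1.
exists (qconj y [:: (s, true)]); split; first by rewrite /= Wy W_gen_inv.
rewrite !relabel_cat Qy /= -[X in _ :: _ :: X](Qeq_gen_inv (e_gen S m s)).
exact: Qeq_Ad (Ad_conj_gen [:: (e_gen S m s, true)] y).
Qed.

Lemma Qeq_cox_rel r : cox_rel S m r -> Qeq (psi r) [::].
Proof.
move=> rel; have := pres_eq_relator rel.
case: rel => s [t [+ ->]]; case: (m s t) => [|k] // _.
have odd_k : odd k.*2.+1 by rewrite /= odd_double.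
rewrite flatten_nseq_alt -[alt s t _]/(alt s t k.*2.+1.+1) alt_rcons odd_k -cats1.
move=> W_rel; have [x [Wx Qx]] := Qeq_alt_odd k s t.
have Wxt : Weq (sval x) [:: (t, false)].
  by rewrite Wx (pres_eq_moveR W_rel) winv1 W_gen_inv.
rewrite relabel_cat Qx (Qeq_Ad (Ad_gen_eqW (y := e_gen S m t) Wxt)).
exact: Qeq_gen_sq.
Qed.

Lemma Qeq_psi a b : Weq a b -> Qeq (psi a) (psi b).
Proof. exact: pres_eq_relabel Qeq_cox_rel a b. Qed.

Lemma Qeq_gen_psi (x : QW) : Qeq [:: (x, false)] (psi (sval x)).
Proof.
have [s [v Wx]] := svalP x.
rewrite (Qeq_psi Wx) !relabel_cat relabel_winv.
rewrite (Qeq_Ad (Ad_conj_gen (psi v) (e_gen S m s))); symmetry.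
by apply/Qeq_Ad/Ad_gen_eqW; rewrite /= phi_psi Wx.
Qed.

Lemma Qeq_psi_phi c : Qeq c (psi (phi c)).
Proof.
elim: c => [|[x b] c IH] //.
rewrite phi_cons relabel_cat -IH -cat1s; apply: pres_eq_catr.
case: b; last exact: Qeq_gen_psi.
by rewrite /phi_letter /= relabel_winv -(Qeq_gen_psi x) winv1.
Qed.

Lemma CW_Qeq_nil c : CW c -> Qeq c [::].
Proof. by move=> Hc; rewrite (Qeq_psi_phi c) (Qeq_psi Hc). Qed.

Definition esq_seq (l : seq S) (n : S -> int) : word QW :=
  flatten [seq wpow (esq S m r) (n r) | r <- l].

Lemma esq_seq_cons r l n : esq_seq (r :: l) n = wpow (esq S m r) (n r) ++ esq_seq l n.
Proof. by []. Qed.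

Lemma esq_prodE (R : {set S}) n : esq_prod S m R n = esq_seq (enum R) n.
Proof. by []. Qed.

Lemma CW_esq_seq l n : CW (esq_seq l n).
Proof. by elim: l => [|r l IH] //; apply: CW_cat (CW_wpow _ (CW_esq r)) IH. Qed.

Lemma esq_seqD l n1 n2 :
  Ad (esq_seq l n1 ++ esq_seq l n2) (esq_seq l (fun r => n1 r + n2 r)%R).
Proof.
elim: l => [|r l IH] //; rewrite !esq_seq_cons.
rewrite -catA (catA (esq_seq l n1)) (CW_central _ (CW_esq_seq l n1)).
by rewrite -catA IH catA wpowD.
Qed.

Lemma esq_seq0 l n : (forall r, n r = 0%R) -> esq_seq l n = [::].
Proof. by move=> n0; elim: l => [|r l IH] //; rewrite esq_seq_cons n0 IH. Qed.

Lemma esq_seq_unit r l : uniq l ->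
  esq_seq l (fun s => (s == r)%:Z%R) = if r \in l then esq S m r else [::].
Proof.
elim: l => [|s l IH] //= /andP [s_l l_uniq].
rewrite esq_seq_cons IH // in_cons.
by case: (eqVneq s r) => [<-|] //=; rewrite (negbTE s_l).
Qed.

Section Generation.
Variable Rs : {set S}.
Hypothesis R_cover : forall x : word S, is_refl S m x ->
  exists2 r, r \in Rs & W_conj S m x [:: (r, false)].

Lemma Ad_gen_sq (x : QW) :
  exists2 r, r \in Rs & Ad [:: (x, false); (x, false)] (esq S m r).
Proof.
have [r Rr [u Wx]] := R_cover (svalP x); exists r => //.
have Ax : Ad [:: (x, false)] (winv (psi u) ++ [:: (e_gen S m r, false)] ++ psi u).
  by rewrite Ad_conj_gen; apply: Ad_gen_eqW; rewrite /= phi_psi Wx.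
rewrite -[[:: (x, false); _]]/([:: (x, false)] ++ [:: (x, false)]) Ax.
by rewrite Ad_conj_cat Ad_conj_CW //; apply: CW_esq.
Qed.

Lemma Qeq_lift c d : Qeq c d -> exists n, Ad c (d ++ esq_prod S m Rs n).
Proof.
have E0 : esq_prod S m Rs (fun _ => 0%R) = [::] by rewrite esq_prodE esq_seq0.
elim=> {c d} [w|a b _ [n Hn]|a b c _ [n1 H1] _ [n2 H2]|u v x b|
               u v rel [Ad_rel|[x ->]]].
- by exists (fun _ => 0%R); rewrite E0 cats0.
- exists (fun r => - n r)%R.
  by rewrite Hn -catA esq_seqD esq_seq0 ?cats0 // => r; rewrite addrN.
- by exists (fun r => n2 r + n1 r)%R; rewrite H1 H2 -catA esq_seqD.
- by exists (fun _ => 0%R); rewrite E0 cats0; apply: pe_cancel.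
- by exists (fun _ => 0%R); rewrite E0 cats0; apply: pe_rel.
- have [r Rr Ax] := Ad_gen_sq x.
  exists (fun s => (s == r)%:Z%R).
  rewrite esq_prodE esq_seq_unit ?enum_uniq // mem_enum Rr Ax.
  by rewrite (CW_central _ (CW_esq r)) -catA.
Qed.

End Generation.

Section Independence.
Variable Rs : {set S}.
Hypothesis R_distinct : forall r r', r \in Rs -> r' \in Rs ->
  W_conj S m [:: (r, false)] [:: (r', false)] -> r = r'.
Local Open Scope ring_scope.

Definition class_weight (r : S) (x : QW) : int :=
  if excluded_middle_informative (W_conj S m (sval x) [:: (r, false)]) then 1 else 0.

Lemma class_weight_ad_rel (x y z : QW) r :
  Weq (sval z) (sval y ++ sval x ++ sval y) -> class_weight r x = class_weight r z.
Proof.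
move=> Wz.
have Wx : Weq (sval x) (sval y ++ sval z ++ sval y).
  by rewrite Wz -!catA (catA (sval y) (sval y)) (refl_sq (svalP y)) /= cats0.
rewrite /class_weight.
case: excluded_middle_informative => Cx; case: excluded_middle_informative => Cz //.
- by case: Cz; apply: W_conj_refl_conj Wz (svalP y) Cx.
- by case: Cx; apply: W_conj_refl_conj Wx (svalP y) Cz.
Qed.

Lemma Ad_class_degree r a b :
  Ad a b -> wdeg (class_weight r) a = wdeg (class_weight r) b.
Proof.
apply: pres_eq_wdeg => _ [x [y [z [Wz ->]]]].
by rewrite !wdeg_cons wdeg_nil /= (class_weight_ad_rel r Wz); lia.
Qed.

Lemma class_weight_gen r r' : r \in Rs -> r' \in Rs ->
  class_weight r (e_gen S m r') = (r' == r)%:Z.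
Proof.
move=> Rr Rr'; rewrite /class_weight; case: excluded_middle_informative => C /=.
  by rewrite (R_distinct Rr' Rr C) eqxx.
by case: eqVneq => // r'r; case: C; exists [::]; rewrite r'r.
Qed.

Lemma class_degree_esq_seq r l n : r \in Rs -> uniq l -> {subset l <= Rs} ->
  wdeg (class_weight r) (esq_seq l n) = if r \in l then 2 * n r else 0.
Proof.
move=> Rr; elim: l => [|s l IH] /=; first by rewrite wdeg_nil.
move=> /andP [s_l l_uniq] l_Rs.
rewrite esq_seq_cons wdeg_cat IH //; last first.
  by move=> y ly; apply: l_Rs; rewrite in_cons ly orbT.
rewrite wdeg_wpow !wdeg_cons wdeg_nil /= class_weight_gen //; last first.
  by apply: l_Rs; rewrite in_cons eqxx.
rewrite in_cons; case: (eqVneq s r) => [<-|_] /=.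
  by rewrite (negbTE s_l); lia.
by case: (r \in l); lia.
Qed.

Lemma esq_prod_free n : Ad (esq_prod S m Rs n) [::] -> forall r, r \in Rs -> n r = 0.
Proof.
move=> /Ad_class_degree deg r Rr; move: (deg r).
rewrite wdeg_nil esq_prodE class_degree_esq_seq ?enum_uniq ?mem_enum ?Rr //; first lia.
by move=> s; rewrite mem_enum.
Qed.

End Independence.
End Coxeter.

Theorem theorem3p1 (S : finType) (m : S -> S -> nat)
  (m_diag : forall s, m s s = 1%N)
  (m_sym : forall s t, m s t = m t s)
  (m_off : forall s t, s != t -> m s t != 1%N)
  (R : {set S})
  (R_cover : forall x : word S, is_refl S m x ->
     exists2 r, r \in R & W_conj S m x [:: (r, false)])
  (R_distinct : forall r r', r \in R -> r' \in R ->
     W_conj S m [:: (r, false)] [:: (r', false)] -> r = r') :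
  (* the e_r^2 lie in C_W *)
  (forall r, r \in R -> in_CW S m (esq S m r)) /\
  (* C_W is abelian *)
  (forall c d, in_CW S m c -> in_CW S m d -> Ad_eq S m (c ++ d) (d ++ c)) /\
  (* the e_r^2 (r in R) generate C_W *)
  (forall c, in_CW S m c -> exists n : S -> int, Ad_eq S m c (esq_prod S m R n)) /\
  (* and are Z-linearly independent *)
  (forall n : S -> int, Ad_eq S m (esq_prod S m R n) [::] ->
     forall r, r \in R -> n r = 0%R).
Proof.
split; first by move=> r _; apply: CW_esq.
split; first by move=> c d Hc _; apply: CW_central.
split; last exact: esq_prod_free.
by move=> c /(CW_Qeq_nil m_diag) /(Qeq_lift m_diag R_cover).
Qed.
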